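(* Let $G=(V,E,w)$ be an undirected graph with non-negative edge weights, $\mathcal L\subseteq V$ a set of labeled vertices and $k\ge1$. For every $v\in V$ let $\mathcal L_v$ be the set of labeled vertices in the connected component of $v$ and $\ell_v=\min\{k,|\mathcal L_v|\}$. Then (1) Algorithm 1 (described in the context) stops after a finite number of steps; (2) once it stops, for every $v\in V$ the output list is $\mathrm{kNN}[v]=[(d_G(s_1,v),s_1),\dots,(d_G(s_{\ell_v},v),s_{\ell_v})]$, where $s_1,\dots,s_{\ell_v}$ are the $\ell_v$ nearest labeled vertices to $v$, sorted by their distance to $v$.
   Context: $d_G$ is the shortest-path distance in $G$. Algorithm 1: it maintains a min-priority queue $Q$ of pairs $(\mathrm{seed},v)\in\mathcal L\times V$ with priorities, and for each $v\in V$ a list kNN$[v]$ (initially empty) and a set $S_v$ (initially empty). Initially, for each $s\in\mathcal L$, $(s,s)$ is inserted with priority $0$. While $Q$ is nonempty: pop the pair $(\mathrm{seed},v_0)$ of minimum priority $\mathrm{dist}$; add $\mathrm{seed}$ to $S_{v_0}$; if kNN$[v_0]$ has fewer than $k$ entries, append $(\mathrm{dist},\mathrm{seed})$ to kNN$[v_0]$ and, for every neighbour $v$ of $v_0$ such that kNN$[v]$ has fewer than $k$ entries and $\mathrm{seed}\notin S_v$, perform decrease-or-insert of $(\mathrm{seed},v)$ with priority $\mathrm{dist}+w(v_0,v)$ (if the pair is in $Q$ its priority is lowered to this value when smaller; otherwise it is inserted). *)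

From mathcomp Require Import all_boot all_order all_algebra.
From mathcomp Require Import reals.

Set Implicit Arguments.
Unset Strict Implicit.
Unset Printing Implicit Defensive.

Import Order.TTheory GRing.Theory Num.Theory.
Local Open Scope ring_scope.

(* A finite undirected weighted graph is given by a vertex type V : finType,
   a symmetric adjacency relation [adj] and a weight function [w]
   (only its values on edges matter). *)

Section KNN.
Variables (V : finType) (R : realType).
Variables (adj : rel V) (w : V -> V -> R) (L : {set V}) (k : nat).

Fixpoint walk_weight (x : V) (p : seq V) : R :=
  match p with
  | [::] => 0
  | y :: p' => w x y + walk_weight y p'
  end.

Definition is_walk (s v : V) (p : seq V) : bool := path adj s p && (last s p == v).

Definition is_dist (s v : V) (d : R) : Prop :=
  (exists2 p, is_walk s v p & walk_weight s p = d) /\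
  (forall p, is_walk s v p -> d <= walk_weight s p).

Definition Lcomp (v : V) : {set V} := [set s in L | connect adj s v].

(* State of Algorithm 1:
   Q seed v = Some p  iff the pair (seed, v) is in the queue with priority p;
   kNN v is the list kNN[v]; S v is the set S_v. *)
Record state := St {
  Q : V -> V -> option R;
  kNN : V -> seq (R * V);
  S : V -> {set V}
}.

Definition init : state :=
  St (fun s v => if (s == v) && (s \in L) then Some 0 else None)
     (fun _ => [::]) (fun _ => set0).

Definition pop_update (st : state) (seed v0 : V) (dist : R) : state :=
  let Q1 := fun s v => if (s == seed) && (v == v0) then None else Q st s v in
  let S1 := fun v => if v == v0 then seed |: S st v else S st v in
  if (size (kNN st v0) < k)%N then
    let K1 := fun v => if v == v0 then rcons (kNN st v) (dist, seed)
                       else kNN st v in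
    let Q2 := fun s v =>
      if [&& s == seed, adj v0 v, (size (K1 v) < k)%N & seed \notin S1 v] then
        Some (match Q1 s v with
              | Some p => Num.min p (dist + w v0 v)
              | None => dist + w v0 v
              end)
      else Q1 s v in
    St Q2 K1 S1
  else St Q1 (kNN st) S1.

(* One iteration: pop a pair of minimum priority (ties broken arbitrarily). *)
Definition step (st st' : state) : Prop :=
  exists seed v0 dist,
    [/\ Q st seed v0 = Some dist,
        (forall s v d, Q st s v = Some d -> dist <= d) &
        st' = pop_update st seed v0 dist].

Inductive reachable : state -> Prop :=
  | reach_init : reachable init
  | reach_step st st' : reachable st -> step st st' -> reachable st'.

Definition queue_empty (st : state) : Prop := forall s v, Q st s v = None.

Definition knn_correct (v : V) (l : seq (R * V)) : Prop :=
  [/\ size l = minn k #|Lcomp v|,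
      uniq (map snd l),
      (forall x, x \in l -> x.2 \in Lcomp v /\ is_dist x.2 v x.1),
      sorted (fun a b : R * V => a.1 <= b.1) l &
      (forall s d, s \in Lcomp v -> s \notin map snd l -> is_dist s v d ->
         forall x, x \in l -> x.1 <= d)].

End KNN.

From mathcomp Require Import all_boot all_order all_algebra.
From mathcomp Require Import reals.
From mathcomp Require Import zify.
Import Order.TTheory GRing.Theory Num.Theory.
Local Open Scope ring_scope.

Set Implicit Arguments.
Unset Strict Implicit.
Unset Printing Implicit Defensive.

(* Termination: queued pairs (s, v) always satisfy s \notin S_v, and popping
   (seed, v0) adds seed to S_v0, so the number of pairs (s, v) with s \notin S_v
   strictly decreases.

   Correctness rests on an invariant of the reachable states. Popped priorities
   never decrease, so kNN entries are bounded by all queued priorities and each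
   kNN[v] stays sorted; queued priorities and kNN entries are weights of walks
   from labeled vertices. The relaxation part says that whenever (p, s) is in
   kNN[u] and u -> v is an edge, the pair (s, v) is covered at p + w(u, v): s is
   listed in kNN[v] with a distance at most that value, or kNN[v] is full with
   all entries below it, or (s, v) is queued with priority at most that value.
   Once the queue is empty only the first two alternatives remain, and they
   propagate along every walk from a labeled vertex; when kNN[u] is full, its k
   seeds all get listed in kNN[v], which then consists of exactly these seeds.
   So a walk of weight W from s to v either finds s in kNN[v] at distance <= W or
   bounds every entry of kNN[v] by W, which yields both the distances and the
   choice of the nearest labeled vertices. *)

Lemma uniq_map_inj_in (T1 T2 : eqType) (f : T1 -> T2) (s : seq T1) :
  uniq (map f s) -> {in s &, injective f}.
Proof.
elim: s => [|x s IH] //= /andP[fx_notin uniq_fs] a b.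
rewrite !inE => /predU1P[-> | a_s] /predU1P[-> | b_s] // fab.
- by move: fx_notin; rewrite fab (map_f f b_s).
- by move: fx_notin; rewrite -fab (map_f f a_s).
- exact: IH.
Qed.

Lemma sorted_rcons (T : eqType) (leT : rel T) (s : seq T) x :
  sorted leT s -> (forall y, y \in s -> leT y x) -> sorted leT (rcons s x).
Proof.
case: s => [|y s] //= sorted_s le_x.
by rewrite rcons_path sorted_s le_x // mem_last.
Qed.

Lemma no_infinite_descent (T : Type) (m : T -> nat) (f : nat -> T) :
  ~ (forall n, (m (f n.+1) < m (f n))%N).
Proof.
move=> decr; have bound n : (m (f n) + n <= m (f 0))%N.
  elim: n => [|n IH]; first by rewrite addn0.
  by apply: leq_trans IH; rewrite addnS ltn_add2r.
by have := bound (m (f 0)).+1; rewrite addnS ltnNge leq_addl.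
Qed.

Section Algorithm.
Variables (V : finType) (R : realType) (adj : rel V) (w : V -> V -> R).
Variables (L : {set V}) (k : nat).
Hypothesis w_ge0 : forall x y, adj x y -> 0 <= w x y.

Lemma walk_weight_rcons x p y :
  walk_weight w x (rcons p y) = walk_weight w x p + w (last x p) y.
Proof. by elim: p x => [|z p IH] x /=; rewrite ?addr0 ?add0r // IH addrA. Qed.

Lemma is_walk_rcons s v p y :
  is_walk adj s v p -> adj v y -> is_walk adj s y (rcons p y).
Proof.
case/andP=> walk_p /eqP last_p vy.
by rewrite /is_walk rcons_path walk_p last_p vy last_rcons /=.
Qed.

Definition attained s v d :=
  s \in L /\ exists2 p, is_walk adj s v p & walk_weight w s p = d.

Lemma attained_rcons s v d y : attained s v d -> adj v y -> attained s y (d + w v y).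
Proof.
case=> sL [p walk_p <-] vy; split=> //; exists (rcons p y); first exact: is_walk_rcons vy.
by rewrite walk_weight_rcons; case/andP: walk_p => _ /eqP ->.
Qed.

Definition knn_full (st : state V R) v := (k <= size (kNN st v))%N.

Definition listed_within (st : state V R) s v W :=
  exists2 p, (p, s) \in kNN st v & p <= W.

Definition full_below (st : state V R) v W :=
  knn_full st v && all (fun e : R * V => e.1 <= W) (kNN st v).

Definition resolved (st : state V R) s v W :=
  listed_within st s v W \/ full_below st v W.

Definition covered (st : state V R) s v W :=
  resolved st s v W \/ exists2 q, Q st s v = Some q & q <= W.

Record invariant (st : state V R) : Prop := Invariant {
  knn_le_queued : forall u e s v q, e \in kNN st u -> Q st s v = Some q -> e.1 <= q;
  knn_size : forall v, (size (kNN st v) <= k)%N;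
  knn_uniq : forall v, uniq (map snd (kNN st v));
  knn_sorted : forall v, sorted (fun a b : R * V => a.1 <= b.1) (kNN st v);
  queued_notin_S : forall s v q, Q st s v = Some q -> s \notin S st v;
  queued_attained : forall s v q, Q st s v = Some q -> attained s v q;
  knn_attained : forall v e, e \in kNN st v -> attained e.2 v e.1;
  knn_edge_covered : forall u p s v, (p, s) \in kNN st u -> adj u v ->
    covered st s v (p + w u v);
  label_covered : forall s, s \in L -> covered st s s 0;
  S_listed_or_full : forall s v, s \in S st v -> s \in map snd (kNN st v) \/ knn_full st v;
  listed_in_S : forall s v, s \in map snd (kNN st v) -> s \in S st v
}.

Lemma invariant_init : invariant (init R L).
Proof.
split=> //=.
- by move=> s v q _; rewrite in_set0.
- move=> s v q; case: ifP => // /andP[/eqP <- sL] [<-].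
  by split=> //; exists [::]; rewrite /is_walk /= ?eqxx.
- by move=> s sL; right; exists 0; rewrite //= eqxx sL.
- by move=> s v; rewrite in_set0.
Qed.

Section PopUpdate.
Variables (st : state V R) (seed v0 : V) (dist : R).
Hypothesis popped : Q st seed v0 = Some dist.
Hypothesis popped_min : forall s v d, Q st s v = Some d -> dist <= d.
Hypothesis inv : invariant st.
Local Notation st' := (pop_update adj w k st seed v0 dist).
Local Notation room := (size (kNN st v0) < k)%N.

Lemma knn_pop_cases v : kNN st' v = kNN st v \/
  [/\ v = v0, room & kNN st' v = rcons (kNN st v0) (dist, seed)].
Proof.
rewrite /pop_update; case: ifP => room_v0 /=; last by left.
by case: eqP => [->|_]; [right | left].
Qed.

Lemma knn_pop_append : room -> kNN st' v0 = rcons (kNN st v0) (dist, seed).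
Proof. by move=> room_v0; rewrite /pop_update room_v0 /= eqxx. Qed.

Lemma knn_pop_full v : knn_full st v -> kNN st' v = kNN st v.
Proof.
case: (knn_pop_cases v) => [// | [-> room_v0 _]].
by rewrite /knn_full leqNgt room_v0.
Qed.

Lemma mem_knn_pop v e : e \in kNN st' v ->
  e \in kNN st v \/ [/\ v = v0, e = (dist, seed) & room].
Proof.
case: (knn_pop_cases v) => [-> | [-> room_v0 ->]]; first by left.
by rewrite mem_rcons inE => /predU1P[->|]; [right | left].
Qed.

Lemma knn_pop_subset v : {subset kNN st v <= kNN st' v}.
Proof.
case: (knn_pop_cases v) => [-> // | [-> _ ->] e].
by rewrite mem_rcons inE => ->; rewrite orbT.
Qed.

Lemma S_pop v : S st' v = if v == v0 then seed |: S st v else S st v.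
Proof. by rewrite /pop_update; case: ifP. Qed.

Lemma S_pop_subset v : S st v \subset S st' v.
Proof. by rewrite S_pop; case: ifP => _; rewrite ?subsetUr. Qed.

Lemma queue_pop s v : Q st' s v =
  if room && [&& s == seed, adj v0 v, (size (kNN st' v) < k)%N & seed \notin S st' v]
  then Some (match (if (s == seed) && (v == v0) then None else Q st s v) with
             | Some p => Num.min p (dist + w v0 v)
             | None => dist + w v0 v end)
  else if (s == seed) && (v == v0) then None else Q st s v.
Proof. by rewrite /pop_update; case: ifP. Qed.

Lemma queue_pop_cases s v q : Q st' s v = Some q ->
  [/\ s = seed, adj v0 v, seed \notin S st' v & q = dist + w v0 v \/ Q st s v = Some q]
  \/ ((s != seed) || (v != v0)) /\ Q st s v = Some q.
Proof.
rewrite queue_pop; case: ifP => [/andP[_ /and4P[/eqP -> v0v _ seed_S]] [<-] | _].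
  left; split=> //; case: ifP => _; first by left.
  case: (Q st seed v) => [p|]; last by left.
  by rewrite /Num.min; case: ifP; [right | left].
by case: ifP => // /negbT; rewrite negb_and; right.
Qed.

Lemma queue_pop_ge s v q : Q st' s v = Some q -> dist <= q.
Proof.
case/queue_pop_cases => [[_ v0v _ [-> | /popped_min //]] | [_ /popped_min //]].
by rewrite lerDl w_ge0.
Qed.

Lemma queue_pop_notin_S s v q : Q st' s v = Some q -> s \notin S st' v.
Proof.
case/queue_pop_cases => [[-> _ // _] | [sv /(queued_notin_S inv) s_S]].
rewrite S_pop; case: (eqVneq v v0) sv s_S => [-> | //]; rewrite orbF => s_seed s_S.
by rewrite in_setU1 negb_or s_seed.
Qed.

Lemma queue_pop_attained s v q : Q st' s v = Some q -> attained s v q.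
Proof.
have old := queued_attained inv.
case/queue_pop_cases => [[-> v0v _ [-> | /old //]] | [_ /old //]].
exact: attained_rcons (old _ _ _ popped) v0v.
Qed.

Lemma queue_pop_keep s v q : Q st s v = Some q -> (s != seed) || (v != v0) ->
  exists2 q', Q st' s v = Some q' & q' <= q.
Proof.
move=> Qsv; rewrite -negb_and => /negbTE sv.
rewrite queue_pop sv Qsv; case: ifP => _; last by exists q.
by exists (Num.min q (dist + w v0 v)); rewrite // ge_min lexx.
Qed.

Lemma queue_pop_push v : room -> adj v0 v -> (size (kNN st' v) < k)%N ->
  seed \notin S st' v -> exists2 q, Q st' seed v = Some q & q <= dist + w v0 v.
Proof.
move=> room_v0 v0v room_v seed_S; rewrite queue_pop room_v0 eqxx v0v room_v seed_S /=.
eexists; first reflexivity.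
by case: ifP => _; last case: (Q st seed v) => [p|]; rewrite ?ge_min lexx ?orbT.
Qed.

Lemma knn_pop_le_dist u e : e \in kNN st' u -> e.1 <= dist.
Proof. by case/mem_knn_pop => [/(knn_le_queued inv)/(_ popped) | [_ -> _]]. Qed.

Lemma covered_pop s v W : covered st s v W -> covered st' s v W.
Proof.
case=> [[[p ps p_le] | full_v] | [q Qsv q_le]].
- by left; left; exists p => //; apply: knn_pop_subset.
- by left; right; case/andP: (full_v) => fv _; rewrite /full_below /knn_full (knn_pop_full fv).
have [sv | ] := boolP ((s != seed) || (v != v0)).
  have [q' Q'sv q'_le] := queue_pop_keep Qsv sv.
  by right; exists q' => //; apply: le_trans q_le.
rewrite negb_or !negbK => /andP[/eqP Es /eqP Ev]; subst s v.
move: Qsv; rewrite popped => -[?]; subst q.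
case room_v0: room.
  by left; left; exists dist; rewrite // knn_pop_append // mem_rcons mem_head.
have full_v0 : knn_full st v0 by rewrite /knn_full leqNgt room_v0.
left; right; rewrite /full_below /knn_full (knn_pop_full full_v0).
rewrite -/(knn_full st v0) full_v0 /=.
by apply/allP => e /(knn_le_queued inv)/(_ popped)/le_trans; apply.
Qed.

Lemma knn_edge_covered_pop u p s v : (p, s) \in kNN st' u -> adj u v ->
  covered st' s v (p + w u v).
Proof.
case/mem_knn_pop => [old uv | [-> [-> ->] room_v0] v0v].
  exact/covered_pop/(knn_edge_covered inv old).
have dist_le : dist <= dist + w v0 v by rewrite lerDl w_ge0.
have [v_v0 | v_neq] := eqVneq v v0.
  left; left; exists dist => //.
  by rewrite v_v0 knn_pop_append // mem_rcons mem_head.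
case full_v: (knn_full st' v).
  left; right; rewrite /full_below full_v; apply/allP => e /knn_pop_le_dist e_le.
  exact: le_trans dist_le.
case/boolP: (seed \in S st v) => [/(S_listed_or_full inv) [|full_old] | seed_S].
- case/mapP=> -[p' s'] old /= seed_s'; subst s'.
  left; left; exists p'; first exact: knn_pop_subset.
  exact: le_trans (knn_le_queued inv old popped) dist_le.
- by move: full_v; rewrite /knn_full (knn_pop_full full_old) -/(knn_full st v) full_old.
right; apply: queue_pop_push => //; first by rewrite ltnNge; apply/negbT.
by rewrite S_pop (negbTE v_neq).
Qed.

Lemma S_listed_or_full_pop s v : s \in S st' v ->
  s \in map snd (kNN st' v) \/ knn_full st' v.
Proof.
have old_case v' : s \in S st v' -> s \in map snd (kNN st' v') \/ knn_full st' v'.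
  case/(S_listed_or_full inv) => [/mapP[e old ->] | full_v].
    by left; apply: map_f; apply: knn_pop_subset.
  by right; rewrite /knn_full knn_pop_full.
rewrite S_pop; case: eqP => [-> | _]; last exact: old_case.
case/setU1P=> [-> | ]; last exact: old_case.
case room_v0: room; first by left; rewrite knn_pop_append // map_rcons mem_rcons mem_head.
by right; rewrite /knn_full knn_pop_full /knn_full leqNgt room_v0.
Qed.

Lemma invariant_pop : invariant st'.
Proof.
have seed_new : seed \notin map snd (kNN st v0).
  by apply: contra (queued_notin_S inv popped); apply: listed_in_S.
split.
- by move=> u e s v q /knn_pop_le_dist e_le /queue_pop_ge; apply: le_trans.
- move=> v; case: (knn_pop_cases v) => [-> | [-> room_v0 ->]]; first exact: knn_size inv v.
  by rewrite size_rcons.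
- move=> v; case: (knn_pop_cases v) => [-> | [-> _ ->]]; first exact: knn_uniq inv v.
  by rewrite map_rcons rcons_uniq seed_new knn_uniq.
- move=> v; case: (knn_pop_cases v) => [-> | [-> _ ->]]; first exact: knn_sorted inv v.
  apply: sorted_rcons; first exact: knn_sorted inv v0.
  by move=> e /(knn_le_queued inv)/(_ popped).
- exact: queue_pop_notin_S.
- exact: queue_pop_attained.
- move=> v e /mem_knn_pop [old | [-> -> _]]; first exact: (knn_attained inv old).
  exact: (queued_attained inv popped).
- exact: knn_edge_covered_pop.
- by move=> s sL; apply/covered_pop/(label_covered inv).
- exact: S_listed_or_full_pop.
- move=> s v /mapP[e /mem_knn_pop [old | [-> -> _]] ->].
    by apply: (subsetP (S_pop_subset v)); apply/(listed_in_S inv)/map_f.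
  by rewrite S_pop eqxx setU11.
Qed.

End PopUpdate.

Lemma reachable_invariant st : reachable adj w L k st -> invariant st.
Proof.
elim=> [|st1 st2 _ inv1 [seed [v0 [dist [popped popped_min ->]]]]].
  exact: invariant_init.
exact: invariant_pop popped popped_min inv1.
Qed.

Definition unsettled (st : state V R) := #|[set x : V * V | x.1 \notin S st x.2]|.

Lemma unsettled_step st st' :
  invariant st -> step adj w k st st' -> (unsettled st' < unsettled st)%N.
Proof.
move=> inv [seed [v0 [dist [popped _ ->]]]].
apply/proper_card/properP; split.
  by apply/subsetP => -[s v]; rewrite !inE; apply/contra/subsetP/S_pop_subset.
by exists (seed, v0); rewrite !inE ?S_pop ?eqxx ?setU11 // (queued_notin_S inv popped).
Qed.

Lemma run_terminates :
  ~ exists f : nat -> state V R, f 0%N = init R L /\ forall n, step adj w k (f n) (f n.+1).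
Proof.
case=> f [f0 run]; apply: (@no_infinite_descent _ unsettled f) => n.
apply: unsettled_step (run n); apply: reachable_invariant.
elim: n => [|n IH]; first by rewrite f0; constructor.
exact: reach_step IH (run n).
Qed.

Lemma resolved_le st s v W1 W2 :
  W1 <= W2 -> resolved st s v W1 -> resolved st s v W2.
Proof.
move=> W12 [[p ps p_le] | /andP[full_v all_v]].
  by left; exists p => //; apply: le_trans W12.
right; rewrite /full_below full_v; apply/allP => e /(allP all_v) e_le.
exact: le_trans W12.
Qed.

Lemma knn_dist_inj st v s p q : invariant st ->
  (p, s) \in kNN st v -> (q, s) \in kNN st v -> p = q.
Proof. by move=> inv ps qs; case: (uniq_map_inj_in (knn_uniq inv v) ps qs erefl). Qed.

(* Pigeonhole: the k distinct seeds of kNN[u] fill kNN[v], which has at most k. *)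
Lemma full_below_of_listed st u v W : invariant st -> knn_full st u ->
  (forall e, e \in kNN st u -> listed_within st e.2 v W) -> full_below st v W.
Proof.
move=> inv full_u listed.
have sub : {subset map snd (kNN st u) <= map snd (kNN st v)}.
  by move=> _ /mapP[e /listed[p ps _] ->]; rewrite (map_f snd ps).
have size_le : (size (map snd (kNN st v)) <= size (map snd (kNN st u)))%N.
  by rewrite !size_map (leq_trans (knn_size inv v)).
have [size_eq same_seeds] := uniq_min_size (knn_uniq inv u) sub size_le.
rewrite /full_below /knn_full -(size_map snd) -size_eq size_map.
rewrite -/(knn_full st u) full_u /=.
apply/allP => -[q t] qt; have /mapP[e e_u t_e] : t \in map snd (kNN st u).
  by rewrite same_seeds (map_f snd qt).
have [p pt p_le] := listed e e_u; rewrite -t_e in pt.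
by rewrite /= (knn_dist_inj inv qt pt).
Qed.

Section Terminated.
Variable st : state V R.
Hypothesis inv : invariant st.
Hypothesis empty : queue_empty st.

Lemma resolved_of_covered s v W : covered st s v W -> resolved st s v W.
Proof. by case=> // -[q]; rewrite empty. Qed.

Lemma resolved_edge s u v W : resolved st s u W -> adj u v ->
  resolved st s v (W + w u v).
Proof.
move=> [[p ps p_le] | /andP[full_u all_u]] uv.
  by apply: resolved_le (resolved_of_covered (knn_edge_covered inv ps uv)); rewrite lerD2r.
have [|not_full] := boolP (full_below st v (W + w u v)); first by right.
right; apply: full_below_of_listed inv full_u _ => -[p t] pt.
have p_le : p + w u v <= W + w u v by rewrite lerD2r (allP all_u _ pt).
have := resolved_le p_le (resolved_of_covered (knn_edge_covered inv pt uv)).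
by case=> // full_v; rewrite full_v in not_full.
Qed.

Lemma resolved_walk s v p : s \in L -> is_walk adj s v p ->
  resolved st s v (walk_weight w s p).
Proof.
move=> sL /andP[+ /eqP <-]; elim/last_ind: p => [_ | p y IH].
  exact/resolved_of_covered/(label_covered inv).
rewrite rcons_path last_rcons walk_weight_rcons => /andP[walk_p last_y].
exact: resolved_edge (IH walk_p) last_y.
Qed.

Lemma knn_entry_dist v x : x \in kNN st v ->
  x.2 \in Lcomp adj L v /\ is_dist adj w x.2 v x.1.
Proof.
case: x => d s xv; have [/= sL [p walk_p weight_p]] := knn_attained inv xv.
split.
  rewrite inE sL; case/andP: walk_p => path_p /eqP last_p.
  by apply/connectP; exists p.
split; first by exists p.
move=> q walk_q; case: (resolved_walk sL walk_q) => [[d' sd' le_d'] | /andP[_ /allP all_le]].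
  by rewrite /= (knn_dist_inj inv xv sd').
exact: all_le _ xv.
Qed.

Lemma knn_size_eq v : size (kNN st v) = minn k #|Lcomp adj L v|.
Proof.
have size_le : (size (kNN st v) <= #|Lcomp adj L v|)%N.
  rewrite -(size_map snd) cardE; apply: uniq_leq_size (knn_uniq inv v) _.
  by move=> _ /mapP[x /knn_entry_dist[x_comp _] ->]; rewrite mem_enum.
have card_le : (size (kNN st v) < k)%N -> (#|Lcomp adj L v| <= size (kNN st v))%N.
  move=> room; rewrite -(size_map snd); apply: leq_trans (card_size _).
  apply/subset_leq_card/subsetP => s; rewrite inE => /andP[sL /connectP[p path_p v_last]].
  have walk_p : is_walk adj s v p by rewrite /is_walk path_p v_last /=.
  case: (resolved_walk sL walk_p) => [[d sd _] | /andP[full_v _]]; first exact: map_f sd.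
  by move: full_v; rewrite /knn_full leqNgt room.
have := knn_size inv v; case: (ltnP (size (kNN st v)) k) => [/card_le|]; lia.
Qed.

Lemma knn_le_unlisted v s d : s \in Lcomp adj L v ->
  s \notin map snd (kNN st v) -> is_dist adj w s v d ->
  forall x, x \in kNN st v -> x.1 <= d.
Proof.
rewrite inE => /andP[sL _] s_new [[p walk_p <-] _] x xv.
case: (resolved_walk sL walk_p) => [[q sq _] | /andP[_ /allP all_le]].
  by rewrite (map_f snd sq) in s_new.
exact: all_le _ xv.
Qed.

Lemma knn_correct_terminated v : knn_correct adj w L k v (kNN st v).
Proof.
split; [exact: knn_size_eq | exact: knn_uniq inv v | exact: knn_entry_dist |
  exact: knn_sorted inv v | exact: knn_le_unlisted].
Qed.

End Terminated.

End Algorithm.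

Theorem theoremB1 (V : finType) (R : realType) (adj : rel V)
    (w : V -> V -> R) (L : {set V}) (k : nat) :
  symmetric adj ->
  (forall x y, adj x y -> w x y = w y x) ->
  (forall x y, adj x y -> 0 <= w x y) ->
  (0 < k)%N ->
  (* (1) every run of Algorithm 1 stops after finitely many steps *)
  (~ exists f : nat -> state V R,
       f 0%N = init R L /\ forall n, step adj w k (f n) (f n.+1)) /\
  (* (2) when it stops, the output lists are correct *)
  (forall st : state V R, reachable adj w L k st -> queue_empty st ->
     forall v, knn_correct adj w L k v (kNN st v)).
Proof.
move=> _ _ w_ge0 _; split; first exact: run_terminates w_ge0.
move=> st reach_st empty v.
exact: knn_correct_terminated (reachable_invariant w_ge0 reach_st) empty v.
Qed.
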